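(* Let $A$ and $B$ be locally constant (unoriented) algebraic conformal nets, identified with commutative algebras over a field $\mathbf{K}$. Then locally constant algebraic defects between $A$ and $B$ are the same as pairs $(D,\varphi)$ where $D$ is an associative $\mathbf{K}$-algebra and $\varphi\colon A\otimes B\to Z(D)$ is an algebra homomorphism from $A\otimes B$ to the center of $D$.
   Context: Fix a field $\mathbf{K}$; all algebras are associative $\mathbf{K}$-algebras. Let $\mathsf{INT}$ be the category of compact connected oriented submanifolds (intervals) of $\mathbf{R}$ with orientation-preserving embeddings. An algebraic conformal net is a functor $\mathcal{A}\colon\mathsf{INT}\to\mathsf{Algebra}$ with $\mathcal{A}(\overline I)=\mathcal{A}(I)^{\mathrm{op}}$, satisfying isotony (images of embeddings are injective), locality (images of algebras of subintervals with disjoint interiors commute in the algebra of the ambient interval) and strong additivity (if $K=I\cup J$ then $\mathcal{A}(K)$ is generated by the images of $\mathcal{A}(I)$ and $\mathcal{A}(J)$). It is locally constant if it sends every positively-oriented interval to the same algebra $A$ and every embedding between positively-oriented intervals to $\mathrm{id}_A$; by locality $A$ is then commutative, and it is called unoriented if all morphisms are sent to $\mathrm{id}_A$. Let $\mathcal{S}^1$ be the unit circle, colored white on its left open half, black on its right open half, with special points $i$ and $-i$. Bicolored circle intervals are compact connected oriented submanifolds of $\mathcal{S}^1$ not containing $-i$ (and containing a neighborhood of $i$ if they contain $i$); they form a category $\mathsf{INT}_{\circ\bullet}$ with color-preserving orientation-preserving embeddings. Its subcategories of white intervals (contained in the left half), black intervals (contained in the right half) and genuinely bicolored intervals (containing $i$)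 are denoted $\mathsf{INT}_\circ$, $\mathsf{INT}_\bullet$, $\mathsf{INT}_{\circ\bullet}^{\mathrm{gen}}$. The maps $x\mapsto \exp(i\arctan x)$ and $x\mapsto -\exp(i\arctan x)$ identify $\mathbf{R}$ with the black and white halves, inducing functors $\Phi_\bullet,\Phi_\circ\colon\mathsf{INT}\to\mathsf{INT}_{\circ\bullet}$. An algebraic defect between conformal nets $\mathcal{A}$ and $\mathcal{B}$ is a functor $D\colon\mathsf{INT}_{\circ\bullet}\to\mathsf{Algebra}$ with $D(\overline I)=D(I)^{\mathrm{op}}$ together with natural isomorphisms $\sigma_\circ\colon\mathcal{A}\Rightarrow D\circ\Phi_\circ$ and $\sigma_\bullet\colon\mathcal{B}\Rightarrow D\circ\Phi_\bullet$, satisfying isotony on embeddings of genuinely bicolored intervals, locality (images of $D(I)$, $D(J)$ for subintervals with disjoint interiors commute in $D(K)$) and strong additivity. A defect between locally constant nets $A$ and $B$ is locally constant if $D$ sends every orientation-preserving morphism within $\mathsf{INT}_\circ$, within $\mathsf{INT}_\bullet$, and within $\mathsf{INT}_{\circ\bullet}^{\mathrm{gen}}$ to an identity, is constant on morphisms from white intervals to genuinely bicolored intervals and on morphisms from black intervals to genuinely bicolored intervals, and $\sigma_\circ,\sigma_\bullet$ are identities. In the correspondence, $D$ is the value of the defect on genuinely bicolored intervals, and the maps $A\to D$, $B\to D$ induced by inclusions of white, resp. black, intervals into genuinely bicolored ones are the restrictions of $\varphi$ to $A\otimes 1$, resp. $1\otimes B$. *)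

From HB Require Import structures.
From mathcomp Require Import all_boot all_order all_algebra.
From mathcomp Require Import all_classical all_reals.
From mathcomp Require Import topology normedtype derive trigo.
From mathcomp Require Import Rstruct Rstruct_topology.
From Stdlib Require Import Rdefinitions.

Set Implicit Arguments.
Unset Strict Implicit.
Unset Printing Implicit Defensive.

Import Order.TTheory GRing.Theory Num.Theory.
Import numFieldNormedType.Exports.
Local Open Scope ring_scope.

Definition mulo (X : pzRingType) (o : bool) (x y : X) : X :=
  if o then x * y else y * x.

Definition klinear (K : pzRingType) (X Y : lmodType K) (h : X -> Y) : Prop :=
  forall (k : K) (x y : X), h (k *: x + y) = k *: h x + h y.

(* Unital K-algebra homomorphism  X^(o1) -> Y^(o2)  where X^true = X and
   X^false = X^op (same carrier, reversed multiplication). *)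
Definition alg_hom_or (K : fieldType) (X Y : algType K) (o1 o2 : bool)
    (h : X -> Y) : Prop :=
  [/\ klinear h, h 1 = 1 & forall x y, h (mulo o1 x y) = mulo o2 (h x) (h y)].

Definition alg_hom (K : fieldType) (X Y : algType K) (h : X -> Y) : Prop :=
  alg_hom_or true true h.

Definition center (K : fieldType) (D : algType K) : D -> Prop :=
  fun z => forall y : D, z * y = y * z.

(* Z(D) is a subalgebra of D: a homomorphism into Z(D) is the same as a
   homomorphism into D whose image lies in Z(D). *)
Definition alg_hom_to_center (K : fieldType) (T D : algType K) (h : T -> D) :=
  alg_hom h /\ forall t, center (h t).

(* The K-subalgebra of X generated by a subset S: smallest subset containing S
   and closed under the (unital) K-algebra operations.  (It is the same for X
   and for X^op.) *)
Definition gen_subalg (K : fieldType) (X : algType K) (S : X -> Prop) : X -> Prop :=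
  fun z => forall P : X -> Prop,
    (forall x, S x -> P x) -> P 1 ->
    (forall x y, P x -> P y -> P (x + y)) ->
    (forall (k : K) x, P x -> P (k *: x)) ->
    (forall x y, P x -> P y -> P (x * y)) -> P z.

(* Tensor product of algebras, given by its universal property:
   t : A -> B -> T is K-bilinear, universal among K-bilinear maps into
   K-vector spaces (so (T,t) is the vector-space tensor product A (x)_K B),
   and the multiplication of T is (a (x) b)(a' (x) b') = aa' (x) bb',
   with unit 1 (x) 1. *)
Definition kbilinear (K : fieldType) (A B : lmodType K) (V : lmodType K)
    (beta : A -> B -> V) : Prop :=
  (forall b, klinear (fun a => beta a b)) /\ (forall a, klinear (beta a)).

Definition is_tensor_algebra (K : fieldType) (A B T : algType K)
    (t : A -> B -> T) : Prop :=
  [/\ kbilinear t,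
      (forall (V : lmodType K) (beta : A -> B -> V), kbilinear beta ->
         exists psi : T -> V,
           [/\ klinear psi, (forall a b, psi (t a b) = beta a b) &
               forall psi' : T -> V, klinear psi' ->
                 (forall a b, psi' (t a b) = beta a b) -> psi' =1 psi]),
      t 1 1 = 1 &
      forall a a' b b', t a b * t a' b' = t (a * a') (b * b')].

(* We use the angular chart theta |-> exp(i theta) of S^1 \ {-i}, with
   theta in ]-pi/2, 3pi/2[.  Then  i  <->  pi/2,  the black (right) open half
   is ]-pi/2, pi/2[ and the white (left) open half is ]pi/2, 3pi/2[.
   The maps x |-> exp(i arctan x) and x |-> -exp(i arctan x) send increasing
   x to increasing theta, so the positive orientation of white/black
   intervals is the counterclockwise one (or = true).
   A compact connected oriented 1-submanifold of S^1 not containing -i is an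
   arc [lo, hi] in this chart with an orientation; if it contains i it
   contains a neighbourhood of i, i.e. i is not an endpoint. *)

Notation RR := Rdefinitions.R.

Definition half_pi : RR := pi / 2.

Record bint := BInt {
  lo : RR; hi : RR; ori : bool;
  lo_lt_hi : lo < hi;
  lo_gt : - half_pi < lo;
  hi_lt : hi < 3%:R * half_pi;
  lo_neq_i : lo != half_pi;
  hi_neq_i : hi != half_pi
}.

Definition in_bint (I : bint) (x : RR) : Prop := lo I <= x <= hi I.

Inductive color := White | Black | Gen.

Definition kind (I : bint) : color :=
  if half_pi < lo I then White else if hi I < half_pi then Black else Gen.

Definition smooth (f : RR -> RR) : Prop :=
  forall (n : nat) (x : RR), derivable (derive1n n (f : RR^o -> RR^o)) x 1.

Definition dR (f : RR -> RR) : RR -> RR := derive1 (f : RR^o -> RR^o).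

(* Morphisms of INT_{o.}: color-preserving, orientation-preserving smooth
   embeddings I -> J (in the chart; a smooth map on the compact arc is the
   restriction of a smooth map on R).  Embedding = immersion (nonzero
   derivative) on the compact arc; orientation-preserving means the derivative
   is positive if I and J carry the same orientation relative to the circle,
   negative otherwise. *)
Definition bhom (I J : bint) : Prop :=
  exists f : RR -> RR,
    [/\ smooth f,
        (forall x, in_bint I x -> in_bint J (f x)),
        (forall x, in_bint I x ->
           if ori I == ori J then 0 < dR f x else dR f x < 0),
        (forall x, in_bint I x -> x < half_pi -> f x < half_pi) &
        (forall x, in_bint I x -> half_pi < x -> half_pi < f x)].

Definition subint (I K : bint) : Prop :=
  [/\ lo K <= lo I, hi I <= hi K & ori I = ori K].

(* For a locally constant defect D between A and B with value D on
   (positively oriented) genuinely bicolored intervals, the conditions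
   "sigma_o, sigma_. are identities", "D(I^bar) = D(I)^op" and "locally
   constant" force:
     D(I) = A on white I, B on black I, D on genuinely bicolored I
     (with the opposite multiplication when ori I = false),
     D(e) = id on morphisms inside INT_o, INT_., INT^gen,
     D(e) = f (resp. g) for every morphism from a white (resp. black)
     interval to a genuinely bicolored one (constant value).
   So the defect is given by f : A -> D and g : B -> D; below, def_mor f g
   is its action on morphisms (there are no other morphisms, e.g. none from
   white to black or from genuinely bicolored to white/black; the remaining
   branches are dummies). *)

Section Defect.
Variables (K : fieldType) (A B : comAlgType K) (D : algType K).

Definition dval (c : color) : algType K :=
  match c with White => (A : algType K) | Black => (B : algType K) | Gen => D end.

Definition def_mor (f : A -> D) (g : B -> D) (c1 c2 : color) :
    dval c1 -> dval c2 :=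
  match c1 as c1' , c2 as c2' return dval c1' -> dval c2' with
  | White, White => id
  | Black, Black => id
  | Gen, Gen => id
  | White, Gen => f
  | Black, Gen => g
  | _, _ => fun _ => 0
  end.

Arguments def_mor f g c1 c2 : clear implicits.

Definition Dm (f : A -> D) (g : B -> D) (I J : bint) :
    dval (kind I) -> dval (kind J) := def_mor f g (kind I) (kind J).
Arguments Dm f g I J : clear implicits.

Definition lc_defect (f : A -> D) (g : B -> D) : Prop :=
  [/\
    (* functor to Algebra, with D(I) = value^(ori I) *)
    (forall I J, bhom I J -> alg_hom_or (ori I) (ori J) (Dm f g I J)),
    (forall I, Dm f g I I =1 id) /\
    (forall I J L, bhom I J -> bhom J L ->
       Dm f g I L =1 Dm f g J L \o Dm f g I J),
    (forall I J, kind I = Gen -> kind J = Gen -> bhom I J ->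
       injective (Dm f g I J)),
    (forall Kk I J, subint I Kk -> subint J Kk ->
       (hi I <= lo J \/ hi J <= lo I) ->
       forall x y, Dm f g I Kk x * Dm f g J Kk y = Dm f g J Kk y * Dm f g I Kk x) &
    (forall Kk I J, subint I Kk -> subint J Kk ->
       (forall x, in_bint Kk x <-> in_bint I x \/ in_bint J x) ->
       forall z, gen_subalg
         (fun w => (exists x, w = Dm f g I Kk x) \/ (exists y, w = Dm f g J Kk y)) z)
  ].

End Defect.

(* A locally constant defect is determined by the two maps f : A -> D and
   g : B -> D that it assigns to the inclusions of a white, resp. black,
   interval into a genuinely bicolored one.  Functoriality on such an
   inclusion makes f and g algebra homomorphisms, and locality for a white
   (black) interval and a disjoint genuinely bicolored interval inside a
   larger one makes their images central.  Conversely, central homomorphisms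
   satisfy all the axioms: embeddings never leave the genuinely bicolored
   intervals, never change color otherwise, and preserve the orientation
   between genuinely bicolored intervals, since an embedding reversing it
   would have to swap the two sides of i.  Finally, pairs of central
   homomorphisms are exactly the restrictions of homomorphisms
   A (x) B -> Z(D), a (x) b |-> f a * g b, by the universal property of the
   tensor product. *)

From HB Require Import structures.
From mathcomp Require Import all_boot all_order all_algebra.
From mathcomp Require Import all_classical all_reals.
From mathcomp Require Import topology normedtype derive trigo.
From mathcomp Require Import Rstruct Rstruct_topology.
From mathcomp Require Import lra.

Set Implicit Arguments.
Unset Strict Implicit.
Unset Printing Implicit Defensive.

Import Order.TTheory GRing.Theory Num.Theory.
Import numFieldNormedType.Exports.
Local Open Scope classical_set_scope.
Local Open Scope ring_scope.

(** * Bicolored circle intervals *)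

Variant kind_spec (I : bint) : color -> Type :=
| KindWhite of half_pi < lo I : kind_spec I White
| KindBlack of hi I < half_pi : kind_spec I Black
| KindGen of lo I < half_pi & half_pi < hi I : kind_spec I Gen.

Lemma kindP I : kind_spec I (kind I).
Proof.
rewrite /kind; case: ifPn => [|loI]; first exact: KindWhite.
case: ifPn => [|hiI]; first exact: KindBlack.
apply: KindGen; rewrite lt_neqAle.
- by rewrite lo_neq_i leNgt.
- by rewrite eq_sym hi_neq_i leNgt.
Qed.

Lemma in_bint_lo I : in_bint I (lo I).
Proof. by rewrite /in_bint lexx ltW // lo_lt_hi. Qed.

Lemma in_bint_hi I : in_bint I (hi I).
Proof. by rewrite /in_bint lexx andbT ltW // lo_lt_hi. Qed.

Lemma kind_GenP I : kind I = Gen <-> in_bint I half_pi.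
Proof.
split; first by case: kindP => // loI hiI _; rewrite /in_bint !ltW.
by case: kindP => // [loI|hiI] /andP[? ?]; exfalso; have := lo_lt_hi I; lra.
Qed.

Lemma bhom_lo_lt I J : bhom I J -> lo I < half_pi -> lo J < half_pi.
Proof.
case=> f [_ fIJ _ f_left _] loI; have /andP[loJ _] := fIJ _ (in_bint_lo I).
exact: le_lt_trans loJ (f_left _ (in_bint_lo I) loI).
Qed.

Lemma bhom_hi_gt I J : bhom I J -> half_pi < hi I -> half_pi < hi J.
Proof.
case=> f [_ fIJ _ _ f_right] hiI; have /andP[_ hiJ] := fIJ _ (in_bint_hi I).
exact: lt_le_trans (f_right _ (in_bint_hi I) hiI) hiJ.
Qed.

Lemma bhom_Gen_ori I J : bhom I J -> kind I = Gen -> ori I = ori J.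
Proof.
case=> f [f_smooth _ f_der f_left f_right]; case: kindP => // loI hiI _.
case: eqP f_der => // _ f_der_neg; exfalso.
have f_derivable x : derivable (f : RR^o -> RR^o) x 1 by exact: f_smooth 0%N x.
have f_cont : {within `[lo I, hi I], continuous (f : RR^o -> RR^o)}.
  by apply: derivable_within_continuous => x _; exact: f_derivable.
have f_nonincr := ler0_derive1_le_cc (fun x _ => f_derivable x) _ f_cont.
have /f_nonincr : forall x, x \in `](lo I), (hi I)[ -> dR f x <= 0.
  move=> x; rewrite in_itv /= => /andP[? ?]; apply/ltW/f_der_neg.
  by rewrite /in_bint !ltW.
have loI_hiI := ltW (lo_lt_hi I).
move=> /(_ (hi I) (lo I)); rewrite !in_itv /= !lexx loI_hiI => /(_ isT isT isT).
have := f_left _ (in_bint_lo I) loI; have := f_right _ (in_bint_hi I) hiI; lra.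
Qed.

Lemma smooth_id : smooth id.
Proof.
have derive1n_id n : derive1n n (id : RR^o -> RR^o) = id \/
    exists c : RR, derive1n n (id : RR^o -> RR^o) = cst c.
  elim: n => [|n [IH|[c IH]]]; first by left.
  - by right; exists 1; rewrite derive1nS IH; apply/funext => x; exact: derive1_id.
  - by right; exists 0; rewrite derive1nS IH; apply/funext => x; exact: derive1_cst.
move=> n x; case: (derive1n_id n) => [->|[c ->]].
- exact: derivable_id.
- exact: derivable_cst.
Qed.

Lemma subint_bhom I J : subint I J -> bhom I J.
Proof.
case=> loJ hiJ oriIJ; exists id; split=> //.
- exact: smooth_id.
- by move=> x /andP[? ?]; rewrite /in_bint (le_trans loJ) ?(le_trans _ hiJ).
- by move=> x _; rewrite oriIJ eqxx /dR derive1_id ltr01.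
Qed.

Definition color_le (c1 c2 : color) : bool :=
  match c1, c2 with
  | White, White | Black, Black | _, Gen => true
  | _, _ => false
  end.

Lemma bhom_color_le I J : bhom I J -> color_le (kind I) (kind J).
Proof.
move=> IJ; have loJ := bhom_lo_lt IJ; have hiJ := bhom_hi_gt IJ.
have := lo_lt_hi I.
case: (kindP J) => [Jw|Jb|? ?]; case: (kindP I) => [Iw|Ib|Ig1 Ig2] //= loI_hiI.
- by have := loJ (lt_trans loI_hiI Ib); lra.
- by have := loJ Ig1; lra.
- by have := hiJ (lt_trans Iw loI_hiI); lra.
- by have := hiJ Ig2; lra.
Qed.

Lemma subint_color_le I J : subint I J -> color_le (kind I) (kind J).
Proof. by move/subint_bhom/bhom_color_le. Qed.

Lemma Gen_bints_overlap I J : kind I = Gen -> kind J = Gen -> lo J < hi I /\ lo I < hi J.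
Proof. by case: kindP => // ? ? _; case: kindP => // ? ? _; split; lra. Qed.

Lemma subint_cover_kind Kk I J : subint I Kk -> subint J Kk ->
    (forall x, in_bint Kk x <-> in_bint I x \/ in_bint J x) ->
  kind I = kind Kk \/ kind J = kind Kk.
Proof.
move=> /subint_color_le IK /subint_color_le JK cover.
case Kk_kind: (kind Kk) IK JK => IK JK.
- by left; case: (kind I) IK.
- by left; case: (kind I) IK.
have /cover[/kind_GenP ->|/kind_GenP ->] := proj1 (kind_GenP Kk) Kk_kind.
- by left.
- by right.
Qed.

Section AlgHomOr.
Variable K : fieldType.

Lemma alg_hom_or_comm_id (X : comAlgType K) (o1 o2 : bool) :
  alg_hom_or (X:=X) (Y:=X) o1 o2 id.
Proof. by split=> // x y; case: o1; case: o2; rewrite /mulo //= mulrC. Qed.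

Lemma alg_hom_or_central (X : comAlgType K) (Y : algType K) (h : X -> Y) o1 o2 :
  alg_hom h -> (forall x, center (h x)) -> alg_hom_or o1 o2 h.
Proof.
case=> h_lin h1 hM h_central; split=> // x y; rewrite /mulo.
by case: o1; case: o2; rewrite ?[y * x]mulrC hM // h_central.
Qed.

Lemma alg_hom_comp (X Y Z : algType K) (h1 : X -> Y) (h2 : Y -> Z) :
  alg_hom h1 -> alg_hom h2 -> alg_hom (h2 \o h1).
Proof.
case=> l1 one1 M1 [l2 one2 M2]; split=> /=; last by move=> x y; rewrite M1 M2.
- by move=> k x y /=; rewrite l1 l2.
- by rewrite one1 one2.
Qed.

Lemma gen_subalg_sub (X : algType K) (S : X -> Prop) x : S x -> gen_subalg S x.
Proof. by move=> Sx P SP _ _ _ _; apply: SP. Qed.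

End AlgHomOr.

(** * Defects defined by central homomorphisms *)

Section CentralDefect.
Variables (K : fieldType) (A B : comAlgType K) (D : algType K).
Variables (f : A -> D) (g : B -> D).

Local Notation mor c1 c2 := (@def_mor K A B D f g c1 c2).

Lemma def_mor_id c : mor c c =1 id.
Proof. by case: c. Qed.

Lemma def_mor_eq_surj c1 c2 : c1 = c2 -> forall z, exists x, z = mor c1 c2 x.
Proof. by move=> -> z; exists z; rewrite def_mor_id. Qed.

Lemma def_mor_comp c1 c2 c3 : color_le c1 c2 -> color_le c2 c3 ->
  mor c1 c3 =1 mor c2 c3 \o mor c1 c2.
Proof. by case: c1; case: c2; case: c3. Qed.

Hypotheses (f_hom : alg_hom f) (g_hom : alg_hom g).
Hypotheses (f_central : forall a, center (f a)) (g_central : forall b, center (g b)).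

Lemma def_mor_alg_hom c1 c2 o1 o2 : color_le c1 c2 -> (c1 = Gen -> o1 = o2) ->
  alg_hom_or o1 o2 (mor c1 c2).
Proof.
case: c1; case: c2 => //= _ ori_eq;
  first [exact: alg_hom_or_comm_id | exact: alg_hom_or_central | by rewrite ori_eq].
Qed.

Lemma def_mor_commute c1 c2 c : color_le c1 c -> color_le c2 c ->
    ~ (c1 = Gen /\ c2 = Gen) ->
  forall x y, mor c1 c x * mor c2 c y = mor c2 c y * mor c1 c x.
Proof.
case: c1; case: c2; case: c => //= _ _ not_Gen x y;
  first [exact: mulrC | exact: f_central | exact: g_central
        | by rewrite f_central | by rewrite g_central | by case: not_Gen].
Qed.

Lemma central_lc_defect : lc_defect f g.
Proof.
split.
- move=> I J IJ; apply: def_mor_alg_hom; first exact: bhom_color_le.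
  exact: bhom_Gen_ori.
- split=> [I|I J L IJ JL]; first exact: def_mor_id.
  exact: def_mor_comp (bhom_color_le IJ) (bhom_color_le JL).
- by move=> I J; rewrite /Dm => -> -> _ x y.
- move=> Kk I J IK JK disjoint; apply: def_mor_commute; try exact: subint_color_le.
  by case=> IG JG; have := Gen_bints_overlap IG JG; lra.
- move=> Kk I J IK JK cover z; apply: gen_subalg_sub.
  by case: (subint_cover_kind IK JK cover) => /def_mor_eq_surj surj; [left|right].
Qed.

End CentralDefect.

(** * Homomorphisms underlying a locally constant defect *)

Lemma half_pi_bounds : 1 <= half_pi < 2.
Proof. by rewrite pihalf_ge1 pihalf_lt2. Qed.

Lemma neq_half_pi (x : RR) : x < half_pi \/ half_pi < x -> x != half_pi.
Proof. by case=> [/lt_eqF|/gt_eqF] ->. Qed.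

Ltac bint_bounds :=
  have /andP[? ?] := half_pi_bounds;
  first [lra | apply: neq_half_pi; lra].

(* The endpoints are chosen against 1 <= half_pi < 2: the white half of the
   chart lies above half_pi and the black half below. *)
Definition white_bint : bint.
Proof. by apply: (@BInt 2 (5 / 2) true); bint_bounds. Defined.
Definition black_bint : bint.
Proof. by apply: (@BInt 0 (1 / 2) true); bint_bounds. Defined.
Definition gen_bint : bint.
Proof. by apply: (@BInt 0 (5 / 2) true); bint_bounds. Defined.
Definition gen_bint_off_white : bint.
Proof. by apply: (@BInt 0 2 true); bint_bounds. Defined.
Definition gen_bint_off_black : bint.
Proof. by apply: (@BInt (1 / 2) (5 / 2) true); bint_bounds. Defined.

Lemma kind_white_bint : kind white_bint = White.
Proof. by case: kindP => //= *; exfalso; bint_bounds. Qed.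
Lemma kind_black_bint : kind black_bint = Black.
Proof. by case: kindP => //= *; exfalso; bint_bounds. Qed.
Lemma kind_gen_bint : kind gen_bint = Gen.
Proof. by case: kindP => //= *; exfalso; bint_bounds. Qed.
Lemma kind_gen_bint_off_white : kind gen_bint_off_white = Gen.
Proof. by case: kindP => //= *; exfalso; bint_bounds. Qed.
Lemma kind_gen_bint_off_black : kind gen_bint_off_black = Gen.
Proof. by case: kindP => //= *; exfalso; bint_bounds. Qed.

Lemma subint_white_gen : subint white_bint gen_bint.
Proof. by split=> /=; bint_bounds. Qed.
Lemma subint_black_gen : subint black_bint gen_bint.
Proof. by split=> /=; bint_bounds. Qed.
Lemma subint_gen_off_white_gen : subint gen_bint_off_white gen_bint.
Proof. by split=> /=; bint_bounds. Qed.
Lemma subint_gen_off_black_gen : subint gen_bint_off_black gen_bint.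
Proof. by split=> /=; bint_bounds. Qed.

Section DefectHomomorphisms.
Variables (K : fieldType) (A B : comAlgType K) (D : algType K).
Variables (f : A -> D) (g : B -> D).
Hypothesis fg_defect : lc_defect f g.

Lemma lc_defect_alg_hom_l : alg_hom f.
Proof.
case: fg_defect => mor_hom _ _ _ _.
have := mor_hom _ _ (subint_bhom subint_white_gen).
by rewrite /Dm kind_white_bint kind_gen_bint.
Qed.

Lemma lc_defect_alg_hom_r : alg_hom g.
Proof.
case: fg_defect => mor_hom _ _ _ _.
have := mor_hom _ _ (subint_bhom subint_black_gen).
by rewrite /Dm kind_black_bint kind_gen_bint.
Qed.

Lemma lc_defect_central_l a : center (f a).
Proof.
case: fg_defect => _ _ _ locality _ y.
have /locality : hi white_bint <= lo gen_bint_off_white \/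
    hi gen_bint_off_white <= lo white_bint by right=> /=; bint_bounds.
move=> /(_ gen_bint subint_white_gen subint_gen_off_white_gen).
by rewrite /Dm kind_white_bint kind_gen_bint kind_gen_bint_off_white => /(_ a y).
Qed.

Lemma lc_defect_central_r b : center (g b).
Proof.
case: fg_defect => _ _ _ locality _ y.
have /locality : hi black_bint <= lo gen_bint_off_black \/
    hi gen_bint_off_black <= lo black_bint by left=> /=; bint_bounds.
move=> /(_ gen_bint subint_black_gen subint_gen_off_black_gen).
by rewrite /Dm kind_black_bint kind_gen_bint kind_gen_bint_off_black => /(_ b y).
Qed.

End DefectHomomorphisms.

(** * Tensor products of algebras *)

Section KLinear.
Variable K : fieldType.

Lemma klinear_comp (X Y Z : lmodType K) (h1 : X -> Y) (h2 : Y -> Z) :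
  klinear h1 -> klinear h2 -> klinear (h2 \o h1).
Proof. by move=> l1 l2 k x y /=; rewrite l1 l2. Qed.

Lemma klinear_mull (X : algType K) (c : X) : klinear (fun x => c * x).
Proof. by move=> k x y; rewrite mulrDr scalerAr. Qed.

Lemma klinear_mulr (X : algType K) (c : X) : klinear (fun x => x * c).
Proof. by move=> k x y; rewrite mulrDl scalerAl. Qed.

End KLinear.

Section TensorAlgebra.
Variables (K : fieldType) (A B T : algType K) (t : A -> B -> T).
Hypothesis t_tensor : is_tensor_algebra t.

Lemma tensor_lift (V : lmodType K) (beta : A -> B -> V) : kbilinear beta ->
  exists psi : T -> V, klinear psi /\ forall a b, psi (t a b) = beta a b.
Proof.
case: t_tensor => _ univ _ _ /univ[psi [psi_lin psi_t _]].
by exists psi.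
Qed.

Lemma tensor_klinear_eq (V : lmodType K) (p q : T -> V) : klinear p -> klinear q ->
  (forall a b, p (t a b) = q (t a b)) -> p =1 q.
Proof.
move=> p_lin q_lin pq; case: t_tensor => [[t_lin_l t_lin_r] univ _ _].
have pt_bilin : kbilinear (fun a b => p (t a b)).
  by split=> [b|a] k x y /=; rewrite ?t_lin_l ?t_lin_r p_lin.
have [psi [_ _ psi_uniq]] := univ V _ pt_bilin.
move=> z; rewrite (psi_uniq p p_lin (fun _ _ => erefl)).
by rewrite (psi_uniq q q_lin (fun a b => esym (pq a b))).
Qed.

Lemma tensor_mul_pure a b : t a b = t a 1 * t 1 b.
Proof. by case: t_tensor => _ _ _ ->; rewrite mulr1 mul1r. Qed.

Lemma tensor_alg_hom_l : alg_hom (fun a => t a 1).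
Proof.
by case: t_tensor => [[t_lin_l _] _ t11 tM]; split=> // x y; rewrite /mulo tM mulr1.
Qed.

Lemma tensor_alg_hom_r : alg_hom (t 1).
Proof.
by case: t_tensor => [[_ t_lin_r] _ t11 tM]; split=> // x y; rewrite /mulo tM mulr1.
Qed.

Lemma tensor_alg_hom_eq (D : algType K) (p q : T -> D) : alg_hom p -> alg_hom q ->
    (forall a, p (t a 1) = q (t a 1)) -> (forall b, p (t 1 b) = q (t 1 b)) ->
  p =1 q.
Proof.
move=> [p_lin _ pM] [q_lin _ qM] pq_l pq_r; apply: tensor_klinear_eq => // a b.
by rewrite tensor_mul_pure (pM _ _) (qM _ _) /= pq_l pq_r.
Qed.

Section CentralLift.
Variables (D : algType K) (f : A -> D) (g : B -> D).
Hypotheses (f_hom : alg_hom f) (g_hom : alg_hom g).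
Hypotheses (f_central : forall a, center (f a)) (g_central : forall b, center (g b)).

Lemma central_tensor_lift :
  exists phi : T -> D, alg_hom_to_center phi /\ forall a b, phi (t a b) = f a * g b.
Proof.
case: f_hom g_hom => [f_lin f1 fM] [g_lin g1 gM].
have fg_bilin : kbilinear (fun a b => f a * g b).
  split=> [b|a] k x y /=; first by rewrite f_lin mulrDl scalerAl.
  by rewrite g_lin mulrDr scalerAr.
have [phi [phi_lin phi_t]] := tensor_lift fg_bilin.
have phiM_pure a b y : phi (t a b * y) = phi (t a b) * phi y.
  move: y; apply: (tensor_klinear_eq (p := phi \o *%R (t a b))
                                     (q := *%R (phi (t a b)) \o phi)).
  - exact: klinear_comp (klinear_mull _) phi_lin.
  - exact: klinear_comp phi_lin (klinear_mull _).
  move=> a' b' /=; case: t_tensor => _ _ _ ->; rewrite !phi_t.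
  move: (fM a a') (gM b b'); rewrite /mulo => -> ->.
  by rewrite !mulrA -[f a * f a' * g b]mulrA (f_central a' (g b)) mulrA.
have phiM x y : phi (x * y) = phi x * phi y.
  move: x; apply: (tensor_klinear_eq (p := phi \o *%R^~ y) (q := *%R^~ (phi y) \o phi)).
  - exact: klinear_comp (klinear_mulr _) phi_lin.
  - exact: klinear_comp phi_lin (klinear_mulr _).
  by move=> a b /=; rewrite phiM_pure.
have phi_central z : center (phi z).
  move=> w; move: z.
  apply: (tensor_klinear_eq (p := *%R^~ w \o phi) (q := *%R w \o phi)).
  - exact: klinear_comp phi_lin (klinear_mulr _).
  - exact: klinear_comp phi_lin (klinear_mull _).
  by move=> a b /=; rewrite phi_t -mulrA (g_central b w) mulrA (f_central a w) -mulrA.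
exists phi; split=> //; split=> //; split=> //.
by case: t_tensor => _ _ <- _; rewrite phi_t f1 g1 mulr1.
Qed.

End CentralLift.
End TensorAlgebra.

Theorem mainTheorem2 (K : fieldType) (A B : comAlgType K) (D : algType K)
    (T : algType K) (t : A -> B -> T) :
  is_tensor_algebra t ->
  (forall phi : T -> D, alg_hom_to_center phi ->
     lc_defect (fun a => phi (t a 1)) (fun b => phi (t 1 b))) /\
  (forall (f : A -> D) (g : B -> D), lc_defect f g ->
     exists phi : T -> D,
       [/\ alg_hom_to_center phi,
           (forall a, f a = phi (t a 1)),
           (forall b, g b = phi (t 1 b)) &
           forall psi : T -> D, alg_hom_to_center psi ->
             (forall a, f a = psi (t a 1)) -> (forall b, g b = psi (t 1 b)) ->
             psi =1 phi]).
Proof.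
move=> t_tensor; split=> [phi [phi_hom phi_central]|f g fg_defect].
  apply: central_lc_defect => [||a|b]; try exact: phi_central.
  - exact: alg_hom_comp (tensor_alg_hom_l t_tensor) phi_hom.
  - exact: alg_hom_comp (tensor_alg_hom_r t_tensor) phi_hom.
have [f_hom g_hom] := (lc_defect_alg_hom_l fg_defect, lc_defect_alg_hom_r fg_defect).
have [phi [phi_hom phi_t]] := central_tensor_lift t_tensor f_hom g_hom
  (lc_defect_central_l fg_defect) (lc_defect_central_r fg_defect).
have phi_l a : f a = phi (t a 1) by case: g_hom => _ g1 _; rewrite phi_t g1 mulr1.
have phi_r b : g b = phi (t 1 b) by case: f_hom => _ f1 _; rewrite phi_t f1 mul1r.
exists phi; split=> // psi [psi_hom _] psi_l psi_r.
apply: (tensor_alg_hom_eq t_tensor psi_hom phi_hom.1) => [a|b].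
- by rewrite -psi_l phi_l.
- by rewrite -psi_r phi_r.
Qed.
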